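(* Consider the case $n=1$ (cubic integrals) of the construction below with $\nu_1=1$, $F(a)=a-a_1$ and $x(a)=\frac a2+\frac{\epsilon c}{\sqrt{\epsilon(a-a_1)}}$, $\epsilon=\pm1$, so that with $u=\sqrt a$ the metric is $$g=\frac{\mu^2(u)\,du^2+dy^2}{u^2},\qquad \mu(u)=1-\frac{c}{[\epsilon(u^2-a_1)]^{3/2}} .$$ The resulting superintegrable systems are globally defined on $M\cong\mathbb{H}^2$ in the following cases: $\mathcal{I}_{++}$: $\mu=1-\frac1{(u^2-a_1)^{3/2}}$, $a_1\in(-\infty,-1)$; $\mathcal{I}_{+-}$: $\mu=1+\frac1{(u^2-a_1)^{3/2}}$, $a_1\in(-\infty,0)$; $\mathcal{I}_{-+}$: $\mu=1-\frac1{(a_1-u^2)^{3/2}}$, $a_1\in(0,1)$; $\mathcal{I}_{--}$: $\mu=1+\frac1{(a_1-u^2)^{3/2}}$, $a_1\in(0,\infty)$.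
   Context: Construction (odd degree $2n+1$, here $n=1$): $F=\sum_kA_ka^k=\prod_i(a-a_i)$, $\Delta_i=\epsilon_i(a-a_i)$, $x=\frac{\nu_n}2a+\sum_i\xi_i\Delta_i^{-1/2}$ on the maximal interval of $a>0$ with all $\Delta_i>0$; $H=\Pi^2+aP_y^2$, $\Pi=\frac a{\dot x}P_a$ (geodesic Hamiltonian of $g=\dot x^2a^{-2}da^2+a^{-1}dy^2$, $y\in\mathbb{R}$); $G=\sum_{k=0}^nA_{n-k}H^{n-k}P_y^{2k+1}$, $Q_1=\sum_{k=0}^n\tilde b_kH^{n-k}\Pi P_y^{2k}$, $Q_2=\sum_{k=0}^n\tilde c_kH^{n-k}P_y^{2k+1}$, $S_1=Q_1+yG$, $S_2=Q_2+yQ_1+\frac{y^2}2G$, with $\tilde b_k=(-1)^k(\nu_n\sigma_k+\sum_i\frac{\xi_i}{\sqrt{\Delta_i}}\sigma^i_{k-1})$, $\tilde c_k=\frac{(-1)^{k+1}}2\{\nu_n^2a\sigma_k+2\nu_n\sum_i\frac{\xi_i}{\sqrt{\Delta_i}}(\sigma^i_k+a\sigma^i_{k-1})+\sum_i\frac{\xi_i^2}{\Delta_i}\sigma^i_{k-1}+\sum_{i\neq j}\frac{\xi_i\xi_j}{\sqrt{\Delta_i\Delta_j}}(\sigma^{ij}_{k-1}+a\sigma^{ij}_{k-2})\}$; for $n=1$: $\sigma_0=1$, $\sigma_1=a_1$, $\sigma^1_0=1$, $\sigma^1_{-1}=\sigma^1_1=0$ (no $\sigma^{ij}$ terms). ''Globally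 defined on $M\cong\mathbb{H}^2$'': $g$ is a smooth Riemannian metric on the whole domain $M=J\times\mathbb{R}$ ($J$ the $u$-interval), there is a smooth diffeomorphism $t=t(u)$ of $J$ onto $(0,\infty)$ or $(-\infty,0)$ with $g=\Phi\,(dt^2+dy^2)/t^2$, $\Phi$ smooth and positive, and $S_1,S_2$ are smooth on $T^*M$. *)

From HB Require Import structures.
From mathcomp Require Import all_boot all_order all_algebra.
From mathcomp Require Import all_classical all_reals all_analysis.
Set Implicit Arguments. Unset Strict Implicit. Unset Printing Implicit Defensive.
Import Order.TTheory GRing.Theory Num.Theory.
Import numFieldNormedType.Exports.
Local Open Scope classical_set_scope.
Local Open Scope ring_scope.

Section Defs.
Variable R : realType.

Definition smooth1 (U : set R) (f : R -> R) : Prop :=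
  forall (k : nat) (x : R), U x -> derivable (derive1n k f) x 1.

Fixpoint Ck (n k : nat) (U : set 'rV[R]_n) (f : 'rV[R]_n -> R) : Prop :=
  match k with
  | 0 => forall x, U x -> {for x, continuous f}
  | k'.+1 => (forall x, U x -> {for x, continuous f}) /\
       forall i : 'I_n,
         (forall x, U x -> derivable f x (delta_mx 0 i)) /\
         Ck k' U (fun x => 'D_(delta_mx 0 i) f x)
  end.

Definition smooth_on (n : nat) (U : set 'rV[R]_n) (f : 'rV[R]_n -> R) : Prop :=
  forall k, Ck k U f.

Definition posdef2 (A : 'M[R]_2) : Prop :=
  forall v : 'rV[R]_2, v != 0 -> 0 < (v *m A *m v^T) 0 0.

Variables (eps c a1 : R).

Definition nu1 : R := 1.
Definition xi1 : R := eps * c.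
Definition Delta (a : R) : R := eps * (a - a1).
(* F(a) = A_1 a + A_0 *)
Definition A1 : R := 1.
Definition A0 : R := - a1.

Definition xfun (a : R) : R := nu1 * a / 2 + xi1 / Num.sqrt (Delta a).
Definition xdot (a : R) : R := derive1 xfun a.

(* elementary symmetric data for n = 1 *)
Definition sigma0 : R := 1.
Definition sigma1 : R := a1.
Definition sigma1_0 : R := 1.
Definition sigma1_m1 : R := 0.
Definition sigma1_1 : R := 0.

Definition bt0 (a : R) : R := nu1 * sigma0 + xi1 / Num.sqrt (Delta a) * sigma1_m1.
Definition bt1 (a : R) : R := - (nu1 * sigma1 + xi1 / Num.sqrt (Delta a) * sigma1_0).
Definition ct0 (a : R) : R :=
  - (1 / 2) * (nu1 ^+ 2 * a * sigma0
     + 2 * nu1 * (xi1 / Num.sqrt (Delta a)) * (sigma1_0 + a * sigma1_m1)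
     + xi1 ^+ 2 / Delta a * sigma1_m1).
Definition ct1 (a : R) : R :=
  (1 / 2) * (nu1 ^+ 2 * a * sigma1
     + 2 * nu1 * (xi1 / Num.sqrt (Delta a)) * (sigma1_1 + a * sigma1_0)
     + xi1 ^+ 2 / Delta a * sigma1_0).

Definition Pi_a (a Pa : R) : R := a / xdot a * Pa.
Definition H_a (a Pa Py : R) : R := (Pi_a a Pa) ^+ 2 + a * Py ^+ 2.
Definition G_a (a Pa Py : R) : R :=
  A1 * H_a a Pa Py * Py + A0 * Py ^+ 3.
Definition Q1_a (a Pa Py : R) : R :=
  bt0 a * H_a a Pa Py * Pi_a a Pa + bt1 a * Pi_a a Pa * Py ^+ 2.
Definition Q2_a (a Pa Py : R) : R :=
  ct0 a * H_a a Pa Py * Py + ct1 a * Py ^+ 3.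
Definition S1_a (a y Pa Py : R) : R := Q1_a a Pa Py + y * G_a a Pa Py.
Definition S2_a (a y Pa Py : R) : R :=
  Q2_a a Pa Py + y * Q1_a a Pa Py + y ^+ 2 / 2 * G_a a Pa Py.

(* a-domain: a > 0 with Delta(a) > 0 (an interval); J is its image under u = sqrt a *)
Definition Jset : set R := [set u | 0 < u /\ 0 < Delta (u ^+ 2)].
Definition Mset : set 'rV[R]_2 := [set m | Jset (m 0 0)].
(* T*M with canonical coordinates (u, y, P_u, P_y) *)
Definition TMset : set 'rV[R]_4 := [set z | Jset (z 0 0)].

(* metric g = xdot^2 a^{-2} da^2 + a^{-1} dy^2 written in (u, y):
   a = u^2, da = 2u du *)
Definition g_uu (u : R) : R := (xdot (u ^+ 2)) ^+ 2 / (u ^+ 2) ^+ 2 * (2 * u) ^+ 2.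
Definition g_yy (u : R) : R := 1 / u ^+ 2.
Definition gmat (m : 'rV[R]_2) : 'M[R]_2 :=
  \matrix_(i < 2, j < 2)
    (if i == j then (if i == 0 then g_uu (m 0 0) else g_yy (m 0 0)) else 0).

(* S1, S2 as functions on T*M: a = u^2, P_a = P_u / (2u) *)
Definition S1 (z : 'rV[R]_4) : R :=
  let u := z 0 0 in
  S1_a (u ^+ 2) (z 0 1) (z 0 2 / (2 * u)) (z 0 3).
Definition S2 (z : 'rV[R]_4) : R :=
  let u := z 0 0 in
  S2_a (u ^+ 2) (z 0 1) (z 0 2 / (2 * u)) (z 0 3).

Definition globally_defined : Prop :=
  [/\
      (forall i j : 'I_2, smooth_on Mset (fun m => gmat m i j)),
      (forall m, Mset m -> posdef2 (gmat m)),
      (* hyperbolic form via a diffeomorphism t = t(u) of J onto a half-line *)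
      (exists (I : set R) (t tinv : R -> R) (Phi : 'rV[R]_2 -> R),
         [/\ (I = [set s | 0 < s] \/ I = [set s | s < 0]),
             ((forall u, Jset u -> I (t u)) /\ (forall s, I s -> Jset (tinv s)) /\
              (forall u, Jset u -> tinv (t u) = u) /\ (forall s, I s -> t (tinv s) = s)),
             (smooth1 Jset t /\ smooth1 I tinv),
             (smooth_on Mset Phi /\ (forall m, Mset m -> 0 < Phi m)) &
             forall m, Mset m ->
               gmat m = (Phi m / (t (m 0 0)) ^+ 2) *:
                 \matrix_(i < 2, j < 2)
                   (if i == j then (if i == 0 then (derive1 t (m 0 0)) ^+ 2 else 1)
                    else 0)]),
      smooth_on TMset S1 &
      smooth_on TMset S2].

End Defs.

From HB Require Import structures.
From mathcomp Require Import all_boot all_order all_algebra.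
From mathcomp Require Import all_classical all_reals all_analysis.
From mathcomp Require Import ring lra.
Set Implicit Arguments. Unset Strict Implicit. Unset Printing Implicit Defensive.
Import Order.TTheory GRing.Theory Num.Theory.
Import numFieldNormedType.Exports.
Local Open Scope classical_set_scope.
Local Open Scope ring_scope.

(* The coordinate t(u) = u - c u / (kappa sqrt (D u)), where
   D u = eps (u^2 - a1) and kappa = D 0 > 0, is the primitive of mu vanishing
   at 0.  In each of the four cases mu has a constant sign sg on the u-interval
   J, and sg t increases from 0 to +oo on J, so t is a diffeomorphism of J onto
   a half-line and g = (t/u)^2 (dt^2 + dy^2) / t^2.  The smoothness claims
   reduce, through the algebra of smooth functions, to smoothness of D, sqrt D
   and xdot(u^2) = mu(u)/2 on J, where D > 0 and mu <> 0; smoothness of t^-1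
   follows inductively from (t^-1)' = 1 / (mu o t^-1). *)

Lemma derive_along_line (R : realType) (V : normedModType R) (f : V -> R) x v :
  'D_v f x = 'D_1 (fun h : R => f (h *: v + x)) 0.
Proof.
rewrite /derive; set g1 := fun h => h^-1 *: _; set g2 := fun h => h^-1 *: _.
suff -> : g1 = g2 by [].
by rewrite funeqE /g1 /g2 => h /=; rewrite addr0 scale0r add0r [_%:A]mulr1.
Qed.

Lemma is_derive_comp_scalar (R : realType) (V : normedModType R)
    (h : R -> R) (f : V -> R) x v dh :
  is_derive (f x) 1 h dh -> derivable f x v ->
  is_derive x v (h \o f) (dh * 'D_v f x).
Proof.
move=> hd /derivable1P /derivableP fd.
have hd' : is_derive (f (0 *: v + x)) 1 h dh by rewrite scale0r add0r.
have [dline Dline] := is_derive1_comp hd' fd.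
apply: DeriveDef; first exact/derivable1P.
by rewrite derive_along_line [X in _ = _ * X]derive_along_line.
Qed.

(** * Smoothness along a set of directions *)

Section SmoothAlong.
Variables (R : realType) (V : normedModType R) (P : set V) (U : set V).
Hypothesis openU : open U.

Fixpoint ck_along (k : nat) (f : V -> R) : Prop :=
  match k with
  | 0 => forall x, U x -> {for x, continuous f}
  | k.+1 => (forall x, U x -> {for x, continuous f}) /\
     forall v, P v -> (forall x, U x -> derivable f x v) /\
        ck_along k (fun x => 'D_v f x)
  end.

Definition smooth_along (f : V -> R) : Prop := forall k, ck_along k f.

Lemma ck_along_cont k f : ck_along k f -> forall x, U x -> {for x, continuous f}.
Proof. by case: k => [|k] //= []. Qed.

Lemma ck_alongS k f : ck_along k.+1 f -> ck_along k f.
Proof.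
elim: k f => [|k IH] f /= [cf Hf] //; split => // v Pv.
by case: (Hf v Pv) => df /IH.
Qed.

Lemma near_open x : U x -> \forall y \near x, U y.
Proof. by move=> Ux; move: openU; rewrite openE => /(_ x Ux). Qed.

Lemma ck_along_eq_in k f g : (forall x, U x -> f x = g x) ->
  ck_along k f -> ck_along k g.
Proof.
have cont_eq_in (f1 g1 : V -> R) x : (forall x, U x -> f1 x = g1 x) -> U x ->
    {for x, continuous f1} -> {for x, continuous g1}.
  move=> E Ux cf; rewrite /prop_for /continuous_at -E //.
  apply: cvg_trans cf; apply: near_eq_cvg.
  by apply: filterS (near_open Ux) => y Uy; rewrite E.
elim: k f g => [|k IH] f g E /=; first by move=> cf x Ux; exact: cont_eq_in (cf x Ux).
move=> [cf Hf]; split; first by move=> x Ux; exact: cont_eq_in (cf x Ux).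
move=> v Pv; have [df Df] := Hf v Pv; split.
  move=> x Ux; apply: near_eq_derivable (df x Ux).
  by apply: filterS (near_open Ux) => y Uy; rewrite E.
apply: IH Df => x Ux; apply: near_eq_derive.
by apply: filterS (near_open Ux) => y Uy; rewrite E.
Qed.

Lemma ck_along_cst k a : ck_along k (fun _ => a).
Proof.
elim: k a => [|k IH] a /=; first by move=> x _; apply: cvg_cst.
split; first by move=> x _; apply: cvg_cst.
move=> v Pv; split; first by move=> x _; apply: derivable_cst.
by apply: (@ck_along_eq_in _ (fun _ => 0)) (IH 0) => x _; rewrite derive_cst.
Qed.

Lemma ck_alongD k f g : ck_along k f -> ck_along k g ->
  ck_along k (fun x => f x + g x).
Proof.
elim: k f g => [|k IH] f g /=.
  by move=> cf cg x Ux; apply: continuousD; [apply: cf|apply: cg].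
move=> [cf Hf] [cg Hg]; split.
  by move=> x Ux; apply: continuousD; [apply: cf|apply: cg].
move=> v Pv; have [df Df] := Hf v Pv; have [dg Dg] := Hg v Pv; split.
  by move=> x Ux; apply: derivableD; [apply: df|apply: dg].
apply: (@ck_along_eq_in _ (fun x => 'D_v f x + 'D_v g x)); last exact: IH.
by move=> x Ux; rewrite (deriveD (df x Ux) (dg x Ux)).
Qed.

Lemma ck_alongM k f g : ck_along k f -> ck_along k g ->
  ck_along k (fun x => f x * g x).
Proof.
elim: k f g => [|k IH] f g /=.
  by move=> cf cg x Ux; apply: continuousM; [apply: cf|apply: cg].
move=> [cf Hf] [cg Hg]; split.
  by move=> x Ux; apply: continuousM; [apply: cf|apply: cg].
move=> v Pv; have [df Df] := Hf v Pv; have [dg Dg] := Hg v Pv; split.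
  by move=> x Ux; apply: derivableM; [apply: df|apply: dg].
apply: (@ck_along_eq_in _ (fun x => f x * 'D_v g x + g x * 'D_v f x)).
  by move=> x Ux; rewrite (deriveM (df x Ux) (dg x Ux)).
have ckf : ck_along k f by apply: ck_alongS; split.
have ckg : ck_along k g by apply: ck_alongS; split.
by apply: ck_alongD; apply: IH.
Qed.

Lemma ck_alongN k f : ck_along k f -> ck_along k (fun x => - f x).
Proof.
move=> ckf; apply: (@ck_along_eq_in _ (fun x => -1 * f x)) => [x _|].
  by rewrite mulN1r.
exact: ck_alongM (ck_along_cst _ _) ckf.
Qed.

Lemma ck_alongX k f n : ck_along k f -> ck_along k (fun x => f x ^+ n).
Proof.
move=> ckf; elim: n => [|n IH].
  by apply: (@ck_along_eq_in _ (fun=> 1)) (ck_along_cst _ _) => x _; rewrite expr0.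
apply: (@ck_along_eq_in _ (fun x => f x * f x ^+ n)) (ck_alongM ckf IH) => x _.
by rewrite exprS.
Qed.

Lemma smooth_along_cont f : smooth_along f -> forall x, U x -> {for x, continuous f}.
Proof. by move=> /(_ 0%N). Qed.

Lemma smooth_along_derivable f v : P v -> smooth_along f ->
  forall x, U x -> derivable f x v.
Proof. by move=> Pv /(_ 1%N) [_ /(_ v Pv) []]. Qed.

Lemma smooth_along_D f v : P v -> smooth_along f ->
  smooth_along (fun x => 'D_v f x).
Proof. by move=> Pv sf k; have [_ /(_ v Pv) []] := sf k.+1. Qed.

Lemma smooth_along_eq_in f g : (forall x, U x -> f x = g x) ->
  smooth_along f -> smooth_along g.
Proof. by move=> E sf k; apply: ck_along_eq_in E _. Qed.

Lemma smooth_along_cst a : smooth_along (fun _ => a).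
Proof. by move=> k; apply: ck_along_cst. Qed.

Lemma smooth_alongD f g : smooth_along f -> smooth_along g ->
  smooth_along (fun x => f x + g x).
Proof. by move=> sf sg k; apply: ck_alongD. Qed.

Lemma smooth_alongM f g : smooth_along f -> smooth_along g ->
  smooth_along (fun x => f x * g x).
Proof. by move=> sf sg k; apply: ck_alongM. Qed.

Lemma smooth_alongN f : smooth_along f -> smooth_along (fun x => - f x).
Proof. by move=> sf k; apply: ck_alongN. Qed.

Lemma smooth_alongX f n : smooth_along f -> smooth_along (fun x => f x ^+ n).
Proof. by move=> sf k; apply: ck_alongX. Qed.

End SmoothAlong.

Section Composition.
Variables (R : realType) (V : normedModType R) (P : set V) (U : set V).
Hypothesis openU : open U.

Lemma ck_along_comp (W : set R) (h : R -> R) (f : V -> R) k :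
  open W -> smooth_along [set (1 : R)] W h -> (forall x, U x -> W (f x)) ->
  ck_along P U k f -> ck_along P U k (h \o f).
Proof.
move=> openW + fW.
have hfC k' g : smooth_along [set (1 : R)] W g -> ck_along P U k' f ->
    forall x, U x -> {for x, continuous (g \o f)}.
  move=> sg ckf x Ux.
  exact: continuous_comp (ck_along_cont ckf Ux) (smooth_along_cont sg (fW x Ux)).
elim: k h => [|k IH] h sh ckf; first exact: hfC sh ckf.
split; first exact: hfC sh ckf.
move=> v Pv; have [df Df] := ckf.2 v Pv.
have hfD x : U x -> is_derive x v (h \o f) ('D_1 h (f x) * 'D_v f x).
  move=> Ux; apply: is_derive_comp_scalar (df x Ux); apply: derivableP.
  by apply: (smooth_along_derivable _ sh (fW x Ux)).
split; first by move=> x /hfD [].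
apply: (@ck_along_eq_in _ _ _ _ openU _ (fun x => ('D_1 h \o f) x * 'D_v f x)).
  by move=> x /hfD hd; rewrite derive_val.
have ckDh : ck_along P U k ('D_1 h \o f).
  by apply: IH (ck_alongS ckf); exact: smooth_along_D _ sh.
exact: ck_alongM ckDh Df.
Qed.

End Composition.

Section ScalarFunctions.
Variable R : realType.

Lemma smooth_along_id (U : set R) :
  open U -> smooth_along [set (1 : R)] U id.
Proof.
move=> openU k; elim: k => [|k IH] /=; first by move=> x _; apply: cvg_id.
split; first by move=> x _; apply: cvg_id.
move=> _ ->; split; first by move=> x _; apply: derivable_id.
apply: (@ck_along_eq_in _ _ _ _ openU _ (fun _ => 1)); last exact: ck_along_cst.
by move=> x _; rewrite derive_id.
Qed.

Lemma smooth_inv : smooth_along [set (1 : R)] [set y | y != 0] GRing.inv.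
Proof.
have openW : open [set y : R | y != 0] := @open_neq R 0.
have invD (y : R) : y != 0 -> is_derive y (1 : R) GRing.inv (- (y^-1 * y^-1)).
  move=> y0; have := is_deriveV (f := id) y0 (is_derive_id y 1).
  by move=> /is_derive_eq; apply; rewrite [_%:A]mulr1 -exprVn expr2.
elim=> [|k IH]; first by move=> y /inv_continuous.
split; first by move=> y /inv_continuous.
move=> _ ->; split; first by move=> y /invD [].
apply: (@ck_along_eq_in _ _ _ _ openW _ (fun y => - (y^-1 * y^-1))).
  by move=> y /invD hd; rewrite derive_val.
exact/ck_alongN/ck_alongM.
Qed.

Lemma smooth_sqrt : smooth_along [set (1 : R)] [set y | 0 < y] Num.sqrt.
Proof.
have openW : open [set y : R | 0 < y] := @open_gt R 0.
elim=> [|k IH]; first by move=> y _; apply: sqrt_continuous.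
split; first by move=> y _; apply: sqrt_continuous.
move=> _ ->; split; first by move=> y /is_derive1_sqrt [].
apply: (@ck_along_eq_in _ _ _ _ openW _ (GRing.inv \o (fun y => 2 * Num.sqrt y))).
  by move=> y /is_derive1_sqrt hd; rewrite derive_val.
apply: (ck_along_comp openW (@open_neq R 0) smooth_inv).
  by move=> y y0; rewrite /= mulf_neq0 // gt_eqF // sqrtr_gt0.
exact/ck_alongM/IH/ck_along_cst.
Qed.

End ScalarFunctions.

Section SmoothAlongClosure.
Variables (R : realType) (V : normedModType R) (P : set V) (U : set V).
Hypothesis openU : open U.

Lemma smooth_along_comp (W : set R) (h : R -> R) (f : V -> R) :
  open W -> smooth_along [set (1 : R)] W h -> (forall x, U x -> W (f x)) ->
  smooth_along P U f -> smooth_along P U (h \o f).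
Proof. by move=> openW sh fW sf k; exact: (ck_along_comp openU openW sh fW (sf k)). Qed.

Lemma smooth_alongV f : (forall x, U x -> f x != 0) ->
  smooth_along P U f -> smooth_along P U (fun x => (f x)^-1).
Proof. exact: smooth_along_comp (@open_neq R 0) (@smooth_inv R). Qed.

Lemma smooth_along_sqrt f : (forall x, U x -> 0 < f x) ->
  smooth_along P U f -> smooth_along P U (fun x => Num.sqrt (f x)).
Proof. exact: smooth_along_comp (@open_gt R 0) (@smooth_sqrt R). Qed.

End SmoothAlongClosure.

Section Coordinates.
Variables (R : realType) (n : nat).

Lemma derive_coord (j : 'I_n) (x v : 'rV[R]_n) :
  'D_v (fun z : 'rV[R]_n => z 0 j) x = v 0 j.
Proof.
have := congr1 (fun M : 'rV[R]_n => M 0 j) (@derive_mx R _ 1 n id x v (@derivable_id R _ x v)).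
by rewrite /= derive_id mxE.
Qed.

Lemma continuous_coord (j : 'I_n) (x : 'rV[R]_n) :
  {for x, continuous (fun z : 'rV[R]_n => z 0 j)}.
Proof. exact/differentiable_continuous/differentiable_coord. Qed.

Lemma open_coord_preimage (j : 'I_n) (J : set R) : open J ->
  open [set z : 'rV[R]_n | J (z 0 j)].
Proof. by move=> openJ; apply: open_comp => // x _; apply: continuous_coord. Qed.

Lemma smooth_along_coord (P U : set 'rV[R]_n) (j : 'I_n) :
  open U -> smooth_along P U (fun z : 'rV[R]_n => z 0 j).
Proof.
move=> openU k; elim: k => [|k IH] /=; first by move=> x _; apply: continuous_coord.
split; first by move=> x _; apply: continuous_coord.
move=> v Pv; split; first by move=> x _; apply/diff_derivable/differentiable_coord.
apply: (@ck_along_eq_in _ _ _ _ openU _ (fun _ => v 0 j)); last exact: ck_along_cst.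
by move=> x _; rewrite derive_coord.
Qed.

Lemma smooth_along_coord_comp (P : set 'rV[R]_n) (j : 'I_n) (J : set R) h :
  open J -> smooth_along [set (1 : R)] J h ->
  smooth_along P [set z | J (z 0 j)] (fun z => h (z 0 j)).
Proof.
move=> openJ sh.
have openU : open [set z : 'rV[R]_n | J (z 0 j)] := open_coord_preimage openJ.
exact: smooth_along_comp openJ sh _ (smooth_along_coord _ j openU).
Qed.

Lemma smooth_along_smooth_on (U : set 'rV[R]_n) f :
  smooth_along (range (delta_mx 0)) U f -> smooth_on U f.
Proof.
move=> sf k; move: (sf k); elim: k f {sf} => [|k IH] f //= [cf Hf]; split => // i.
by have [df /IH] := Hf (delta_mx 0 i) (ex_intro2 _ _ i I erefl).
Qed.

End Coordinates.

Lemma smooth_along_smooth1 (R : realType) (U : set R) f :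
  smooth_along [set (1 : R)] U f -> smooth1 U f.
Proof.
move=> sf k; elim: k f sf => [|k IH] f sf x Ux; first exact: smooth_along_derivable _ sf _ Ux.
rewrite derive1Sn (_ : derive1 f = fun x => 'D_1 f x); last by apply: funext => y; rewrite derive1E.
by apply: IH => //; apply: smooth_along_D.
Qed.

(* Hypotheses are matched syntactically: unification up to conversion would
   unfold functions such as [xdot], defined by a limit, and does not finish. *)
Ltac smooth_along_tac := repeat first
  [ match goal with H : ?G |- ?G => exact: H end
  | apply: smooth_along_cst
  | apply: smooth_along_coord
  | apply: smooth_along_id
  | apply: smooth_alongD
  | apply: smooth_alongN
  | apply: smooth_alongM
  | apply: smooth_alongX
  | apply: smooth_alongV
  | apply: smooth_along_sqrt ].

Lemma scale_realE (R : realType) (x y : R) : x *: y = x * y.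
Proof. by []. Qed.

Lemma sqrtr_pos_sqr (R : rcfType) (y : R) : 0 < y ->
  0 < Num.sqrt y /\ Num.sqrt y ^+ 2 = y.
Proof. by move=> y0; rewrite sqrtr_gt0 sqr_sqrtr ?ltW. Qed.

Definition diag2 (R : pzRingType) (a b : R) : 'M[R]_2 :=
  \matrix_(i < 2, j < 2) (if i == j then (if i == 0 then a else b) else 0).

Lemma scale_diag2 (R : comPzRingType) (k a b : R) :
  k *: diag2 a b = diag2 (k * a) (k * b).
Proof. by apply/matrixP => i j; rewrite !mxE; case: (i == j); case: (i == 0); rewrite ?mulr0. Qed.

Lemma posdef2_diag2 (R : realType) (a b : R) : 0 < a -> 0 < b ->
  posdef2 (diag2 a b).
Proof.
move=> a0 b0 v v0; rewrite !mxE !big_ord_recr !big_ord0 /= !mxE.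
rewrite !big_ord_recr !big_ord0 /= !mxE /= !add0r !mulr0 !addr0 add0r.
set x := v 0 _; set y := v 0 ord_max.
have sq_gt0 (z : R) : z != 0 -> 0 < z * z by move=> z0; rewrite -expr2 exprn_even_gt0 // z0 orbT.
have [x0|/sq_gt0 x0] := eqVneq x 0; last by nra.
have [y0|/sq_gt0 y0] := eqVneq y 0; last by nra.
move/eqP: v0; apply: contra_notP => _; apply/rowP => i; rewrite mxE.
by case: i => [[|[|//]]] Hi; [rewrite -x0 | rewrite -y0]; congr (v 0 _); apply: val_inj.
Qed.

(** * The hyperbolic coordinate *)

Section CubicIntegral.
Variables (R : realType) (eps c a1 : R).
Hypothesis cases : [\/ (eps = 1 /\ c = 1 /\ a1 < -1),
      (eps = 1 /\ c = -1 /\ a1 < 0),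
      (eps = -1 /\ c = 1 /\ 0 < a1 < 1)
    | (eps = -1 /\ c = -1 /\ 0 < a1)].

Local Notation J := (Jset eps a1).

Definition D (u : R) : R := Delta eps a1 (u ^+ 2).
Definition kappa : R := D 0.
Definition mu (u : R) : R := 1 - c / (D u * Num.sqrt (D u)).
(* Since D u - eps u^2 = kappa, the derivative of u / sqrt (D u) is
   kappa / (D u)^(3/2); hence t_of' = mu. *)
Definition t_of (u : R) : R := u - c * u / (kappa * Num.sqrt (D u)).
(* The sign of mu and of t_of on J: negative exactly in case I_{-+}. *)
Definition sg : R := if eps == 1 then 1 else - c.

Lemma cases_sg : [\/ [/\ eps = 1, c = 1, a1 < -1 & sg = 1],
      [/\ eps = 1, c = -1, a1 < 0 & sg = 1],
      [/\ eps = -1, c = 1, 0 < a1 < 1 & sg = -1]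
    | [/\ eps = -1, c = -1, 0 < a1 & sg = 1]].
Proof.
have m1 : (-1 == 1 :> R) = false by apply/eqP; lra.
rewrite /sg; case: cases => -[-> [-> h]]; rewrite ?eqxx ?m1 ?opprK;
  by [constructor 1|constructor 2|constructor 3|constructor 4].
Qed.

Lemma DE u : D u = eps * u ^+ 2 + kappa.
Proof. by rewrite /kappa /D /Delta; ring. Qed.

Lemma D_gt0 u : J u -> 0 < D u.
Proof. by case. Qed.

Lemma kappa_gt0 : 0 < kappa.
Proof. by rewrite /kappa /D /Delta; case: cases => -[-> [_ h]]; lra. Qed.

Lemma D_gt0_le x u : 0 <= x <= u -> 0 < D u -> 0 < D x.
Proof.
rewrite !DE => /andP[x0 xu]; have := kappa_gt0.
by case: cases_sg => -[-> _ _ _]; nra.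
Qed.

Lemma xdot_sqr u : 0 < D u -> xdot eps c a1 (u ^+ 2) = mu u / 2.
Proof.
rewrite /mu /D; move: (u ^+ 2) => a Da; have [s0 ss] := sqrtr_pos_sqr Da.
have dDelta : is_derive a (1 : R) (Delta eps a1) eps.
  by apply: is_derive_eq; rewrite /Delta !scale_realE; ring.
have dsqrt := is_derive1_comp (is_derive1_sqrt Da) dDelta.
have dinv := is_deriveV (f := Num.sqrt \o Delta eps a1) (lt0r_neq0 s0) dsqrt.
have dx : is_derive a (1 : R) (xfun eps c a1)
    (1 / 2 + xi1 eps c * (- Num.sqrt (Delta eps a1 a) ^- 2 *: ((2 * Num.sqrt (Delta eps a1 a))^-1 * eps))).
  rewrite /xfun /nu1; apply: is_deriveD.
  by apply: is_derive_eq; rewrite !scale_realE; ring.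
rewrite /xdot derive1E derive_val /xi1 scale_realE.
set s := Num.sqrt _ in s0 ss *; rewrite -ss; clearbody s; move/lt0r_neq0: s0 => s0.
by case: cases => -[-> _]; field.
Qed.

Lemma is_derive_t u : 0 < D u -> is_derive u (1 : R) t_of (mu u).
Proof.
move=> Du; have [s0 ss] := sqrtr_pos_sqr Du.
have dD : is_derive u (1 : R) D (eps * (2 * u)).
  by apply: is_derive_eq; rewrite /D /Delta !scale_realE; ring.
have dsqrt := is_derive1_comp (is_derive1_sqrt Du) dD.
have dksqrt := is_deriveM (is_derive_cst kappa u 1) dsqrt.
have ks0 : kappa * Num.sqrt (D u) != 0 by rewrite mulf_neq0 ?lt0r_neq0 ?kappa_gt0.
have dinv := is_deriveV (f := fun y => kappa * (Num.sqrt \o D) y) ks0 dksqrt.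
rewrite /t_of /mu; apply: is_derive_eq; rewrite !scale_realE /=.
have kE : kappa = D u - eps * u ^+ 2 by rewrite DE; ring.
set s := Num.sqrt (D u) in s0 ss ks0 *; rewrite -ss in kE *; clearbody s.
rewrite kE in ks0 *; field.
by move: ks0; rewrite mulf_eq0 negb_or andbC.
Qed.

Lemma D_gt1 u : eps = 1 -> c = 1 -> 1 < D u.
Proof. by rewrite /D /Delta; case: cases_sg => -[-> -> h _] e c1; nra. Qed.

Lemma D_lt1 u : eps = -1 -> c = 1 -> D u < 1.
Proof. by rewrite /D /Delta; case: cases_sg => -[-> -> h _] e c1; nra. Qed.

Lemma sg_one_sub_div_gt0 q : 0 < q ->
  (eps = 1 -> c = 1 -> 1 < q) -> (eps = -1 -> c = 1 -> q < 1) ->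
  0 < sg * (1 - c / q).
Proof.
move=> q0 hpp hmp; have iq0 : 0 < q^-1 by rewrite invr_gt0.
have qiq : q * q^-1 = 1 by rewrite divff // gt_eqF.
move: (q^-1) iq0 qiq => iq iq0 qiq.
case: cases_sg => -[e c1 _ ->]; move: hpp hmp; rewrite e c1 => hpp hmp.
- by have := hpp erefl erefl; nra.
- nra.
- by have := hmp erefl erefl; nra.
- nra.
Qed.

Lemma sg_mu_gt0 u : J u -> 0 < sg * mu u.
Proof.
move=> [_]; rewrite -/(D u) => Du; have [s0 ss] := sqrtr_pos_sqr Du.
apply: sg_one_sub_div_gt0 => [|e c1|e c1]; first exact: mulr_gt0.
- by have := D_gt1 u e c1; nra.
- by have := D_lt1 u e c1; nra.
Qed.

Lemma t_ofE u : 0 < D u -> t_of u = u * (1 - c / (kappa * Num.sqrt (D u))).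
Proof.
move=> Du; have [s0 _] := sqrtr_pos_sqr Du; have k0 := kappa_gt0.
by rewrite /t_of; field; rewrite !lt0r_neq0.
Qed.

Lemma sg_t_gt0 u : J u -> 0 < sg * t_of u.
Proof.
move=> [u0]; rewrite -/(D u) => Du; have [s0 ss] := sqrtr_pos_sqr Du.
have k0 := kappa_gt0.
rewrite t_ofE // mulrCA; apply: mulr_gt0 => //.
apply: sg_one_sub_div_gt0 => [|e c1|e c1]; first exact: mulr_gt0.
- by have := D_gt1 u e c1; have := D_gt1 0 e c1; rewrite -/kappa; nra.
- by have := D_lt1 u e c1; have := D_lt1 0 e c1; rewrite -/kappa; nra.
Qed.

Lemma is_derive_sg_t u : 0 < D u ->
  is_derive u (1 : R) (fun y => sg * t_of y) (sg * mu u).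
Proof.
by move=> /is_derive_t dt; apply: is_derive_eq; rewrite !scale_realE.
Qed.

Lemma continuous_sg_t u v : (forall x, u <= x <= v -> 0 < D x) ->
  {within `[u, v], continuous (fun y => sg * t_of y)}.
Proof.
move=> Dx; apply: derivable_within_continuous => x.
by rewrite in_itv /= => /Dx /is_derive_sg_t [].
Qed.

Lemma sg_t_increasing u v : J u -> J v -> u < v -> sg * t_of u < sg * t_of v.
Proof.
move=> [u0 _] [_ Dv] uv.
have Jx x : u <= x -> x <= v -> J x.
  move=> ux xv; split; first exact: lt_le_trans ux.
  by apply: D_gt0_le Dv; rewrite xv (le_trans (ltW u0) ux).
have Jx_open x : x \in `]u, v[ -> J x.
  by rewrite in_itv /= => /andP[/ltW ux /ltW xv]; apply: Jx.
apply: (@gtr0_derive1_lt_cc _ (fun y => sg * t_of y) u v) => //.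
- by move=> x /Jx_open [_ /is_derive_sg_t []].
- move=> x /Jx_open Jx'; have dt := is_derive_sg_t Jx'.2.
  by rewrite derive1E derive_val; apply: sg_mu_gt0.
- by apply: continuous_sg_t => x /andP[ux xv]; have [] := Jx x ux xv.
- by rewrite in_itv /= lexx ltW.
- by rewrite in_itv /= lexx ltW.
Qed.

Lemma t_inj u v : J u -> J v -> t_of u = t_of v -> u = v.
Proof.
move=> Ju Jv tuv; case: (ltgtP u v) => // [uv|vu].
- by have := sg_t_increasing Ju Jv uv; rewrite tuv ltxx.
- by have := sg_t_increasing Jv Ju vu; rewrite tuv ltxx.
Qed.

Lemma t0 : t_of 0 = 0.
Proof. by rewrite /t_of mulr0 mul0r subr0. Qed.

Lemma sqrtD_ratio_unbounded M : eps = -1 -> 0 < M ->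
  exists2 u, J u & M <= u / (kappa * Num.sqrt (D u)).
Proof.
move=> e M0; have k0 := kappa_gt0.
have DE' x : D x = kappa - x ^+ 2 by rewrite DE e; ring.
have [r0 rr] := sqrtr_pos_sqr k0; move: (Num.sqrt kappa) r0 rr => r r0 rr.
(* u is chosen with sqrt (D u) = d, with d so small that 2 u >= sqrt kappa. *)
set d := r / (2 + 2 * kappa * M).
have d0 : 0 < d by rewrite divr_gt0 //; nra.
have dr : d * (2 + 2 * kappa * M) = r by rewrite /d divfK //; nra.
clearbody d.
have d2r : 2 * d <= r by have := mulr_gt0 (mulr_gt0 k0 M0) d0; nra.
have [u0 uu] := @sqrtr_pos_sqr _ (kappa - d ^+ 2) ltac:(nra).
move: (Num.sqrt _) u0 uu => u u0 uu.
have Du : D u = d ^+ 2 by rewrite DE' uu; ring.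
have sDu : Num.sqrt (D u) = d by rewrite Du sqrtr_sqr gtr0_norm.
exists u; first by split; rewrite // -[Delta _ _ _]/(D u) Du exprn_gt0.
have ur : r <= 2 * u by nra.
rewrite sDu ler_pdivlMr; last exact: mulr_gt0.
nra.
Qed.

Lemma t_of_ge_linear u : eps = 1 -> c = 1 -> 0 < u -> u * (1 - kappa^-1) <= t_of u.
Proof.
move=> e c1 u0; have k1 : 1 < kappa := D_gt1 0 e c1; have Du := D_gt1 u e c1.
have [q0 qq] := sqrtr_pos_sqr (lt_trans ltr01 Du); have k0 := kappa_gt0.
rewrite t_ofE ?(lt_trans ltr01 Du) // c1 div1r ler_pM2l // lerD2l lerN2.
rewrite lef_pV2 ?posrE ?(mulr_gt0 k0 q0) //; nra.
Qed.

Lemma sg_t_unbounded s : exists2 u, J u & s <= sg * t_of u.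
Proof.
have k0 := kappa_gt0; set M := `|s| + 1.
have M0 : 0 < M by rewrite ltr_pwDr.
have sM : s <= M by rewrite (le_trans (ler_norm s)) // lerDl.
have tE u : t_of u = u - c * (u / (kappa * Num.sqrt (D u))) by rewrite /t_of mulrA.
have Jpos u : eps = 1 -> 0 < u -> J u.
  by move=> e u0; split; rewrite // -/(D u) DE e mul1r ltr_wpDl ?sqr_ge0.
case: cases_sg => -[e c1 h ->].
- have k1 : 1 < kappa := D_gt1 0 e c1.
  set u := M * kappa / (kappa - 1).
  have u0 : 0 < u by rewrite /u divr_gt0 ?mulr_gt0 //; lra.
  have uM : u * (1 - kappa^-1) = M by rewrite /u; field; rewrite !gt_eqF //; lra.
  exists u; first exact: Jpos.
  by rewrite mul1r (le_trans sM) // -uM t_of_ge_linear.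
- exists M; first exact: Jpos.
  have [q0 _] := sqrtr_pos_sqr (D_gt0 (Jpos M e M0)).
  rewrite mul1r tE c1 mulN1r opprK (le_trans sM) // lerDl ltW //.
  by rewrite divr_gt0 // mulr_gt0.
- have [u [u0 Du] hu] := sqrtD_ratio_unbounded (M := M + 1) e ltac:(lra).
  exists u => //; rewrite tE c1 mul1r.
  have : u < 1 by move: Du; rewrite /Delta e; nra.
  lra.
- have [u [u0 Du] hu] := sqrtD_ratio_unbounded e M0.
  exists u => //; rewrite tE c1 mul1r mulN1r opprK.
  lra.
Qed.

Lemma sg_neq0 : sg != 0.
Proof. by case: cases_sg => -[_ _ _ ->]; rewrite ?oppr_eq0 oner_eq0. Qed.

Lemma t_surj s : 0 < sg * s -> exists2 u, J u & t_of u = s.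
Proof.
move=> s0; have [v [v0 Dv] sv] := sg_t_unbounded (sg * s).
have D0 x : 0 <= x <= v -> 0 < D x by move=> /D_gt0_le; apply.
have [|x] := IVT (ltW v0) (continuous_sg_t D0) (v := sg * s).
  by rewrite /= t0 mulr0 min_l ?max_r ?(le_trans (ltW s0)) // ltW.
rewrite in_itv /= => /andP[x0 xv] /(mulfI sg_neq0) txs.
have x_neq0 : x != 0 by apply: contraTneq s0 => x_0; rewrite -txs x_0 t0 mulr0 ltxx.
by exists x => //; split; [rewrite lt_neqAle eq_sym x_neq0 | apply: D0; rewrite x0].
Qed.

Lemma smooth_D U : open U -> smooth_along [set (1 : R)] U D.
Proof. by move=> openU; rewrite /D /Delta; smooth_along_tac. Qed.

Lemma openJ : open J.
Proof.
have -> : J = [set u | 0 < u] `&` D @^-1` [set y | 0 < y] by [].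
apply: openI; first exact: open_gt.
apply: open_comp; last exact: open_gt.
by move=> u _; apply: (smooth_along_cont (smooth_D openT)).
Qed.

Lemma smooth_sqrtD : smooth_along [set (1 : R)] J (fun u => Num.sqrt (D u)).
Proof. by apply: (smooth_along_sqrt openJ D_gt0); apply: smooth_D openJ. Qed.

Lemma sqrtD_neq0 u : J u -> Num.sqrt (D u) != 0.
Proof. by move=> /D_gt0 Du; rewrite gt_eqF // sqrtr_gt0. Qed.

Lemma smooth_t : smooth_along [set (1 : R)] J t_of.
Proof.
have openU := openJ; have sS := smooth_sqrtD; rewrite /t_of; smooth_along_tac.
by move=> u /sqrtD_neq0 s0; rewrite mulf_neq0 // gt_eqF // kappa_gt0.
Qed.

Lemma smooth_mu : smooth_along [set (1 : R)] J mu.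
Proof.
have openU := openJ; have sS := smooth_sqrtD; have sD := smooth_D openJ.
rewrite /mu; smooth_along_tac.
by move=> u Ju; rewrite mulf_neq0 ?sqrtD_neq0 // gt_eqF ?D_gt0.
Qed.

Lemma smooth_xdot_sqr : smooth_along [set (1 : R)] J (fun u => xdot eps c a1 (u ^+ 2)).
Proof.
apply: (smooth_along_eq_in openJ (f := fun u => mu u / 2)).
  by move=> u /D_gt0 /xdot_sqr.
have openU := openJ; have sm := smooth_mu; smooth_along_tac.
Qed.

Definition I_t : set R := [set s | 0 < sg * s].

Lemma I_t_half_line : I_t = [set s | 0 < s] \/ I_t = [set s | s < 0].
Proof.
rewrite /I_t; case: cases_sg => -[_ _ _ ->]; [left|left|right|left];
  by apply/seteqP; split => s /=; lra.
Qed.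

Lemma open_I_t : open I_t.
Proof. by case: I_t_half_line => ->; [apply: open_gt | apply: open_lt]. Qed.

(* Outside [I_t], [tinv] is an arbitrary junk value. *)
Definition tinv (s : R) : R := xget 0 [set u | J u /\ t_of u = s].

Lemma tinvP s : I_t s -> J (tinv s) /\ t_of (tinv s) = s.
Proof.
by move=> /t_surj [u Ju tu]; apply: (xgetPex 0 (P := [set u | J u /\ t_of u = s])); exists u.
Qed.

Lemma t_ofK u : J u -> tinv (t_of u) = u.
Proof. by move=> Ju; have [Jt tt] := tinvP (sg_t_gt0 Ju); apply: t_inj Jt Ju tt. Qed.

Lemma mu_neq0 u : J u -> mu u != 0.
Proof. by move=> /sg_mu_gt0; apply: contraTneq => ->; rewrite mulr0 ltxx. Qed.

Lemma is_derive_tinv s : I_t s ->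
  {for s, continuous tinv} /\ is_derive s (1 : R) tinv (mu (tinv s))^-1.
Proof.
move=> /tinvP [Ju <-]; set u := tinv s.
have nearJ := near_open openJ Ju.
have tK : {near u, cancel t_of tinv} by apply: filterS nearJ => v /t_ofK.
have tC : {near u, continuous t_of}.
  by apply: filterS nearJ => v Jv; apply: smooth_along_cont smooth_t _ Jv.
rewrite t_ofK //; split; first exact: nbhs_singleton (near_can_continuous tK tC).
exact: is_derive_inverse tK tC (is_derive_t (D_gt0 Ju)) (mu_neq0 Ju).
Qed.

Lemma smooth_tinv : smooth_along [set (1 : R)] I_t tinv.
Proof.
have sVmu := smooth_alongV openJ mu_neq0 smooth_mu.
elim=> [|k IH]; first by move=> s /is_derive_tinv [].
split; first by move=> s /is_derive_tinv [].
move=> _ ->; split; first by move=> s /is_derive_tinv [_ []].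
apply: (@ck_along_eq_in _ _ _ _ open_I_t _ ((fun u => (mu u)^-1) \o tinv)).
  by move=> s /is_derive_tinv [_ dt]; rewrite derive_val.
by apply: (ck_along_comp open_I_t openJ sVmu _ IH) => s /tinvP [].
Qed.

(** * The metric and the integrals *)

Lemma u_neq0 u : J u -> u != 0.
Proof. by case=> u0 _; rewrite gt_eqF. Qed.

Lemma g_uu_eq u : J u -> g_uu eps c a1 u = mu u ^+ 2 / u ^+ 2.
Proof.
by move=> Ju; rewrite /g_uu xdot_sqr ?D_gt0 //; field; rewrite u_neq0.
Qed.

Lemma gmatE m : gmat eps c a1 m = diag2 (g_uu eps c a1 (m 0 0)) (g_yy (m 0 0)).
Proof. by []. Qed.

Lemma open_M : open (Mset eps a1).
Proof. exact: open_coord_preimage openJ. Qed.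

Lemma smooth_along_lift n (P : set 'rV[R]_n.+1) h :
  smooth_along [set (1 : R)] J h ->
  smooth_along P [set z | J (z 0 0)] (fun z => h (z 0 0)).
Proof. exact: smooth_along_coord_comp openJ. Qed.

Lemma smooth_g_uu : smooth_along [set (1 : R)] J (g_uu eps c a1).
Proof.
have oJ := openJ; have sX := smooth_xdot_sqr; rewrite /g_uu; smooth_along_tac.
by move=> u /u_neq0 u0; rewrite !expf_neq0.
Qed.

Lemma smooth_g_yy : smooth_along [set (1 : R)] J (@g_yy R).
Proof.
have oJ := openJ; rewrite /g_yy; smooth_along_tac.
by move=> u /u_neq0 u0; rewrite expf_neq0.
Qed.

Lemma smooth_gmat i j : smooth_on (Mset eps a1) (fun m => gmat eps c a1 m i j).
Proof.
apply: smooth_along_smooth_on; apply: (smooth_along_eq_in open_M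
  (f := fun m => if i == j then (if i == 0 then g_uu eps c a1 (m 0 0) else g_yy (m 0 0)) else 0)).
  by move=> m _; rewrite mxE.
have openU := open_M; case: (i == j); last by smooth_along_tac.
by case: (i == 0); apply: smooth_along_lift; [apply: smooth_g_uu | apply: smooth_g_yy].
Qed.

Lemma gmat_posdef m : Mset eps a1 m -> posdef2 (gmat eps c a1 m).
Proof.
move=> Jm; have u0 := u_neq0 Jm; rewrite gmatE.
apply: posdef2_diag2; last by rewrite /g_yy divr_gt0 // exprn_even_gt0 //= u0 orbT.
rewrite g_uu_eq // divr_gt0 // exprn_even_gt0 //= ?u0 ?orbT //.
exact: mu_neq0.
Qed.

Definition Phi (m : 'rV[R]_2) : R := t_of (m 0 0) ^+ 2 / m 0 0 ^+ 2.

Lemma t_neq0 u : J u -> t_of u != 0.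
Proof. by move=> /sg_t_gt0; apply: contraTneq => ->; rewrite mulr0 ltxx. Qed.

Lemma smooth_Phi : smooth_on (Mset eps a1) Phi.
Proof.
apply/smooth_along_smooth_on/(@smooth_along_lift 1 _ (fun u => t_of u ^+ 2 / u ^+ 2)).
have oJ := openJ; have st := smooth_t; smooth_along_tac.
by move=> u /u_neq0 u0; rewrite expf_neq0.
Qed.

Lemma Phi_gt0 m : Mset eps a1 m -> 0 < Phi m.
Proof.
move=> Jm; rewrite /Phi divr_gt0 // exprn_even_gt0 //= ?orbT //.
  exact: t_neq0.
exact: u_neq0.
Qed.

Lemma gmat_hyperbolic m : Mset eps a1 m ->
  gmat eps c a1 m = (Phi m / t_of (m 0 0) ^+ 2) *: diag2 (derive1 t_of (m 0 0) ^+ 2) 1.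
Proof.
move=> Jm; have t0 := t_neq0 Jm; have u0 := u_neq0 Jm; have dt := is_derive_t (D_gt0 Jm).
rewrite gmatE scale_diag2 derive1E derive_val g_uu_eq // /Phi /g_yy.
by congr diag2; field; rewrite t0 u0.
Qed.

Lemma smooth_TM_parts (P : set 'rV[R]_4) :
  [/\ smooth_along P (TMset eps a1) (fun z => xdot eps c a1 (z 0 0 ^+ 2)),
       smooth_along P (TMset eps a1) (fun z => Num.sqrt (Delta eps a1 (z 0 0 ^+ 2)))
     & smooth_along P (TMset eps a1) (fun z => Delta eps a1 (z 0 0 ^+ 2))].
Proof.
split; [exact: smooth_along_lift smooth_xdot_sqr | exact: smooth_along_lift smooth_sqrtD |].
exact: smooth_along_lift (smooth_D openJ).
Qed.

Lemma denominators_neq0 u : J u -> [/\ xdot eps c a1 (u ^+ 2) != 0,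
  Num.sqrt (Delta eps a1 (u ^+ 2)) != 0, Delta eps a1 (u ^+ 2) != 0 & 2 * u != 0].
Proof.
move=> Ju; split; [|exact: sqrtD_neq0|exact/lt0r_neq0/D_gt0|].
  by rewrite xdot_sqr ?(D_gt0 Ju) // mulf_neq0 ?mu_neq0.
by apply: mulf_neq0; [rewrite pnatr_eq0 | exact: u_neq0].
Qed.

Lemma smooth_S1 : smooth_on (TMset eps a1) (S1 eps c a1).
Proof.
apply: smooth_along_smooth_on.
have openU : open (TMset eps a1) := open_coord_preimage openJ.
have [sX sS sD] := smooth_TM_parts (range (delta_mx 0)).
rewrite /S1 /S1_a /Q1_a /G_a /H_a /Pi_a /bt0 /bt1 /nu1 /xi1 /sigma0 /sigma1 /sigma1_0 /sigma1_m1 /A1 /A0 /=.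
smooth_along_tac.
all: by move=> z /= /denominators_neq0 [].
Qed.

Lemma smooth_S2 : smooth_on (TMset eps a1) (S2 eps c a1).
Proof.
apply: smooth_along_smooth_on.
have openU : open (TMset eps a1) := open_coord_preimage openJ.
have [sX sS sD] := smooth_TM_parts (range (delta_mx 0)).
rewrite /S2 /S2_a /Q1_a /Q2_a /G_a /H_a /Pi_a /bt0 /bt1 /ct0 /ct1 /nu1 /xi1.
rewrite /sigma0 /sigma1 /sigma1_0 /sigma1_m1 /sigma1_1 /A1 /A0 /=.
smooth_along_tac.
all: by move=> z /= /denominators_neq0 [].
Qed.

End CubicIntegral.

Theorem proposition27 (R : realType) (eps c a1 : R) :
  [\/ (eps = 1 /\ c = 1 /\ a1 < -1),          (* I_{++} *)
      (eps = 1 /\ c = -1 /\ a1 < 0),          (* I_{+-} *)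
      (eps = -1 /\ c = 1 /\ 0 < a1 < 1)       (* I_{-+} *)
    | (eps = -1 /\ c = -1 /\ 0 < a1)] ->      (* I_{--} *)
  globally_defined eps c a1.
Proof.
move=> cases; split.
- exact: smooth_gmat cases.
- exact: gmat_posdef cases.
- exists (I_t eps c), (t_of eps c a1), (tinv eps c a1), (Phi eps c a1); split.
  + exact: I_t_half_line cases.
  + split; first exact: sg_t_gt0 cases.
    split; first by move=> s /(tinvP cases) [].
    split; first exact: t_ofK cases.
    by move=> s /(tinvP cases) [].
  + split; apply: smooth_along_smooth1; [exact: smooth_t cases | exact: smooth_tinv cases].
  + split; [exact: smooth_Phi cases | exact: Phi_gt0 cases].
  + exact: gmat_hyperbolic cases.
- exact: smooth_S1 cases.
- exact: smooth_S2 cases.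
Qed.
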